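(* Let $N\ge 2$ and let $A=J-I$ be the adjacency matrix of the complete graph $K_N$. For integers $k\ge1$, $m\ge1$ define $$\mathcal A[k,m]=\sum_{\substack{j_1+\cdots+j_k=m\\ j_i\ge1}}\ \prod_{i=1}^k (A^{j_i})_{11}.$$ Then for every $x\in(0,1)$, $$|\mathcal A[k,m]|\le \frac{(N-1)^m}{(N-1-x)^k}\,\frac{x^{2k-m}}{(1-x)^k};$$ in particular $|\mathcal A[k,m]|\le 2^{m-k}\frac{(N-1)^m}{(N-\frac32)^k}$, and, if $m>2k$, $$|\mathcal A[k,m]|\le\frac{(N-1)^m}{\left(N-1-\frac{m-2k}{m-k}\right)^k}\,\frac{(m-k)^{m-k}}{(m-2k)^{m-2k}k^k}.$$
   Context: $(A^{j})_{11}$ is the number of closed walks of length $j$ starting and ending at node $1$. *)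

From mathcomp Require Import all_boot all_order all_algebra.
Set Implicit Arguments. Unset Strict Implicit. Unset Printing Implicit Defensive.
Import Order.TTheory GRing.Theory Num.Theory.
Local Open Scope ring_scope.

Definition KN (R : pzRingType) (N : nat) : 'M[R]_N := const_mx 1 - 1%:M.

(* A[k,m] = sum over compositions (j_1,...,j_k) of m with all j_i >= 1 of
   prod_i (A^{j_i})_{i0 i0}; i0 plays the role of the vertex "1". *)
Definition Acal (R : pzRingType) (N : nat) (i0 : 'I_N) (k m : nat) : R :=
  \sum_(j : {ffun 'I_k -> 'I_m.+1} |
        [forall i, (0 < j i)%N] && ((\sum_(i < k) (j i : nat))%N == m))
    \prod_(i < k) ((KN R N) ^+ (j i)) i0 i0.

From mathcomp Require Import all_boot all_order all_algebra ring zify.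
Set Implicit Arguments. Unset Strict Implicit. Unset Printing Implicit Defensive.
Import Order.TTheory GRing.Theory Num.Theory.
Local Open Scope ring_scope.

(** Write [a_j] for the diagonal entry [(A^j)_(i0,i0)].  Every row of [A^j]
    sums to [(N-1)^j] because [A *m J = (N-1) *: J] for the all-ones matrix
    [J], and [A = J - 1] then gives [a_(j+1) = (N-1)^j - a_j]; hence [a_1 = 0]
    and [0 <= a_(j+1) <= (N-1)^j].  Multiplying [A[k,m]] by [r^m] with
    [r = x/(N-1)] distributes [r^(j_i)] over the factors, and forgetting the
    constraint [j_1 + ... + j_k = m] bounds the result by [(sum_(t>=1) a_t r^t)^k],
    where the series is at most [sum_(t>=2) x^t/(N-1) <= x^2/((1-x)(N-1))].
    The three bounds follow since [N-1-x <= N-1], with [x = 1/2] and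
    [x = (m-2k)/(m-k)] respectively. *)

Section CompleteGraphWalks.
Variables (R : comPzRingType) (N : nat).
Local Notation A := (KN R N).
Local Notation J := (const_mx 1 : 'M[R]_N).
Local Notation n1 := (N%:R - 1 : R).

Lemma KN_mulmx_const : A *m J = n1 *: J.
Proof.
apply/matrixP => i j; rewrite mulmxBl mul1mx !mxE.
by under eq_bigr do rewrite !mxE mulr1; rewrite sumr_const card_ord mulr1.
Qed.

Lemma KN_exp_mulmx_const j : A ^+ j *m J = n1 ^+ j *: J.
Proof.
elim: j => [|j IHj]; first by rewrite !expr0 mulmxE mul1r scale1r.
by rewrite exprSr -mulmxE -mulmxA KN_mulmx_const -scalemxAr IHj scalerA -exprS.
Qed.

Lemma KN_exp_diagS j i : (A ^+ j.+1) i i = n1 ^+ j - (A ^+ j) i i.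
Proof.
by rewrite exprSr -mulmxE mulmxBr mulmx1 KN_exp_mulmx_const !mxE mulr1.
Qed.

End CompleteGraphWalks.

Lemma sum_prod_ffun_le_exp (R : numDomainType) (I J : finType) (Q : pred J)
    (P : pred {ffun I -> J}) (c : J -> R) :
    (forall t, Q t -> 0 <= c t) ->
  \sum_(f : {ffun I -> J} | [forall i, Q (f i)] && P f) \prod_i c (f i)
    <= (\sum_(t | Q t) c t) ^+ #|I|.
Proof.
move=> c_ge0; rewrite -prodr_const bigA_distr_big.
rewrite [leRHS](bigID P) /= -[leLHS]addr0 lerD //.
by apply: sumr_ge0 => f /andP[/ffun_onP Qf _]; apply: prodr_ge0 => i _; exact/c_ge0/Qf.
Qed.

Lemma sum_geometric_le (R : numFieldType) (x : R) (b n : nat) :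
  0 <= x -> x < 1 -> \sum_(b <= t < n) x ^+ t <= x ^+ b / (1 - x).
Proof.
move=> x_ge0 x_lt1; rewrite ler_pdivlMr ?subr_gt0 //.
rewrite -{1}[b]add0n big_addn big_mkord.
under eq_bigr do rewrite exprD.
have geom : (\sum_(i < n - b) x ^+ i) * (1 - x) = 1 - x ^+ (n - b).
  by rewrite mulrC -opprB mulNr -subrX1 opprB.
rewrite -mulr_suml mulrAC geom ler_piMl ?exprn_ge0 //.
by rewrite lerBlDr lerDl exprn_ge0.
Qed.

Lemma Acal_mulrX (R : comPzRingType) (N : nat) (i0 : 'I_N) (k m : nat) (r : R) :
  Acal R i0 k m * r ^+ m =
  \sum_(j : {ffun 'I_k -> 'I_m.+1} |
        [forall i, (0 < j i)%N] && ((\sum_(i < k) (j i : nat))%N == m))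
    \prod_(i < k) ((KN R N ^+ j i) i0 i0 * r ^+ j i).
Proof.
rewrite mulr_suml; apply: eq_bigr => j /andP[_ /eqP sum_j].
by rewrite -[in r ^+ m]sum_j -prodrXr -big_split.
Qed.

Section WalkCounts.
Variables (R : numDomainType) (N : nat).
Hypothesis N_gt1 : (1 < N)%N.
Local Notation A := (KN R N).
Local Notation n1 := (N%:R - 1 : R).

Lemma KN_degree_ge1 : 1 <= n1.
Proof. by rewrite lerBrDr -(natrD R 1 1) ler_nat. Qed.

Lemma KN_exp_diag_bounds j i : 0 <= (A ^+ j.+1) i i <= n1 ^+ j.
Proof.
elim: j => [|j /andP[a_ge0 a_le]].
  by rewrite KN_exp_diagS expr0 mxE eqxx mulr1n subrr lexx ler01.
rewrite KN_exp_diagS lerBlDr lerDl a_ge0 andbT subr_ge0 (le_trans a_le) //.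
by rewrite exprS ler_peMl ?exprn_ge0 ?KN_degree_ge1 // (le_trans ler01 KN_degree_ge1).
Qed.

Lemma KN_exp_diag_ge0 j i : 0 <= (A ^+ j) i i.
Proof.
case: j => [|j]; last by case/andP: (KN_exp_diag_bounds j i).
by rewrite expr0 mxE eqxx ler01.
Qed.

Lemma Acal_ge0 (i0 : 'I_N) k m : 0 <= Acal R i0 k m.
Proof. by apply: sumr_ge0 => j _; apply: prodr_ge0 => i _; apply: KN_exp_diag_ge0. Qed.

End WalkCounts.

Section AcalBound.
Variables (R : numFieldType) (N : nat) (i0 : 'I_N).
Hypothesis N_gt1 : (1 < N)%N.
Variable x : R.
Hypotheses (x_gt0 : 0 < x) (x_lt1 : x < 1).
Local Notation A := (KN R N).
Local Notation n1 := (N%:R - 1 : R).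

Let n1_gt0 : 0 < n1. Proof. exact: lt_le_trans ltr01 (KN_degree_ge1 R N_gt1). Qed.
Let r_ge0 : 0 <= x / n1. Proof. by rewrite divr_ge0 ?ltW. Qed.

Lemma weighted_diag_sum_le m :
  \sum_(t < m.+1 | (0 < t)%N) (A ^+ t) i0 i0 * (x / n1) ^+ t
    <= x ^+ 2 / (1 - x) / n1.
Proof.
apply: (@le_trans _ _ ((\sum_(2 <= t < m.+1) x ^+ t) / n1)); last first.
  by apply: ler_wpM2r; [rewrite invr_ge0 ltW | apply: sum_geometric_le; rewrite ?ltW].
rewrite big_geq_mkord mulr_suml big_mkcond [leRHS]big_mkcond /=.
apply: ler_sum => -[[|[|t]] _] _ //=.
  by rewrite KN_exp_diagS expr0 mxE eqxx mulr1n subrr mul0r.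
have /andP[_ diag_le] := KN_exp_diag_bounds R N_gt1 t.+1 i0.
apply: le_trans (ler_wpM2r (exprn_ge0 _ r_ge0) diag_le) _.
suff -> : n1 ^+ t.+1 * (x / n1) ^+ t.+2 = x ^+ t.+2 / n1 by [].
by rewrite expr_div_n (exprS n1 t.+1); field; rewrite ?expf_neq0 gt_eqF.
Qed.

Lemma Acal_mulrX_le k m :
  Acal R i0 k m * (x / n1) ^+ m <= (x ^+ 2 / (1 - x) / n1) ^+ k.
Proof.
pose weight (t : 'I_m.+1) := (A ^+ t) i0 i0 * (x / n1) ^+ t.
have weight_ge0 (t : 'I_m.+1) : (0 < t)%N -> 0 <= weight t.
  by rewrite mulr_ge0 ?exprn_ge0 ?KN_exp_diag_ge0.
rewrite Acal_mulrX.
apply: le_trans (sum_prod_ffun_le_exp _ weight_ge0) _.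
rewrite card_ord lerXn2r ?weighted_diag_sum_le // nnegrE ?sumr_ge0 //.
by rewrite !divr_ge0 ?exprn_ge0 ?ltW // subr_gt0.
Qed.

Lemma Acal_le k m :
  Acal R i0 k m <= n1 ^+ m / (n1 - x) ^+ k * (x ^+ (2 * k) / x ^+ m / (1 - x) ^+ k).
Proof.
have x1_gt0 : 0 < 1 - x by rewrite subr_gt0.
have n1x_gt0 : 0 < n1 - x.
  by rewrite subr_gt0 (lt_le_trans x_lt1) ?KN_degree_ge1.
rewrite -(ler_pM2r (exprn_gt0 m (divr_gt0 x_gt0 n1_gt0))).
apply: le_trans (Acal_mulrX_le k m) _.
rewrite !expr_div_n -exprM mulrAC.
have -> : n1 ^+ m / (n1 - x) ^+ k * (x ^+ (2 * k) / x ^+ m / (1 - x) ^+ k)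
            * (x ^+ m / n1 ^+ m) = x ^+ (2 * k) / (n1 - x) ^+ k / (1 - x) ^+ k.
  by field; rewrite !expf_neq0 // gt_eqF.
rewrite ler_pM2r ?invr_gt0 ?exprn_gt0 // ler_pM2l ?exprn_gt0 //.
rewrite lef_pV2 ?posrE ?exprn_gt0 // lerXn2r ?nnegrE ?ltW //.
by rewrite ltrBlDr ltrDl.
Qed.

End AcalBound.

Lemma expfzB_nat (R : fieldType) (x : R) (a b : nat) :
  x != 0 -> x ^ (a%:Z - b%:Z) = x ^+ a / x ^+ b.
Proof. by move=> x_neq0; rewrite expfzDr // -exprnN. Qed.

Section AcalSpecialBounds.
Variables (R : numFieldType) (N : nat) (i0 : 'I_N).
Hypothesis N_gt1 : (1 < N)%N.
Local Notation n1 := (N%:R - 1 : R).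

Lemma Acal_le_half k m :
  Acal R i0 k m <= 2 ^+ m / 2 ^+ k * n1 ^+ m / (N%:R - 3 / 2) ^+ k.
Proof.
have two_neq0 : (2 : R) != 0 by rewrite pnatr_eq0.
have half_gt0 : 0 < 1 / 2 :> R by rewrite divr_gt0 ?ltr0n.
have half_lt1 : 1 / 2 < 1 :> R by rewrite mul1r invf_lt1 ?ltr0n ?ltr1n.
apply: le_trans (Acal_le i0 N_gt1 half_gt0 half_lt1 k m) _.
have -> : 1 - 1 / 2 = 1 / 2 :> R by field.
have -> : n1 - 1 / 2 = N%:R - 3 / 2 by field.
suff -> : (1 / 2) ^+ (2 * k) / (1 / 2) ^+ m / (1 / 2) ^+ k = 2 ^+ m / 2 ^+ k :> R.
  by rewrite mulrC mulrA.
rewrite !expr_div_n !expr1n mul2n -addnn exprD.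
by field; rewrite ?expf_neq0.
Qed.

Lemma Acal_le_balanced k m : (0 < k)%N -> (2 * k < m)%N ->
  Acal R i0 k m <=
    n1 ^+ m / (n1 - (m - 2 * k)%:R / (m - k)%:R) ^+ k
    * ((m - k)%:R ^+ (m - k) / ((m - 2 * k)%:R ^+ (m - 2 * k) * k%:R ^+ k)).
Proof.
move=> k_gt0 two_k_lt_m; set p := (m - 2 * k)%N.
have pR_gt0 : 0 < p%:R :> R by rewrite ltr0n subn_gt0.
have kR_gt0 : 0 < k%:R :> R by rewrite ltr0n.
have pkR_gt0 : 0 < p%:R + k%:R :> R by rewrite addr_gt0.
have -> : (m - k = p + k)%N by rewrite /p; lia.
have x_gt0 : 0 < p%:R / (p + k)%:R :> R by rewrite natrD divr_gt0.
have x_lt1 : p%:R / (p + k)%:R < 1 :> R.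
  by rewrite natrD ltr_pdivrMr // mul1r ltrDl.
apply: le_trans (Acal_le i0 N_gt1 x_gt0 x_lt1 k m) _.
suff -> : (p%:R / (p + k)%:R) ^+ (2 * k) / (p%:R / (p + k)%:R) ^+ m
          / (1 - p%:R / (p + k)%:R) ^+ k
          = (p + k)%:R ^+ (p + k) / (p%:R ^+ p * k%:R ^+ k) :> R by [].
have -> : m = (p + 2 * k)%N by rewrite /p; lia.
have -> : 1 - p%:R / (p + k)%:R = k%:R / (p + k)%:R :> R.
  by rewrite natrD; field; rewrite gt_eqF.
rewrite !expr_div_n natrD mul2n -addnn !exprD.
by field; rewrite ?expf_neq0 ?gt_eqF.
Qed.

End AcalSpecialBounds.

Theorem mainTheorem3 (R : realFieldType) (N : nat) (hN : (1 < N)%N)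
    (k m : nat) (hk : (0 < k)%N) (hm : (0 < m)%N) :
  let A := Acal R (Ordinal (ltnW hN)) k m in
  (forall x : R, 0 < x -> x < 1 ->
     `|A| <= (N%:R - 1) ^+ m / (N%:R - 1 - x) ^+ k
             * (x ^ ((2 * k)%:Z - m%:Z) / (1 - x) ^+ k))
  /\ `|A| <= 2 ^ (m%:Z - k%:Z) * (N%:R - 1) ^+ m / (N%:R - 3 / 2) ^+ k
  /\ ((2 * k < m)%N ->
      `|A| <= (N%:R - 1) ^+ m
               / (N%:R - 1 - (m - 2 * k)%:R / (m - k)%:R) ^+ k
             * ((m - k)%:R ^+ (m - k)
                / ((m - 2 * k)%:R ^+ (m - 2 * k) * k%:R ^+ k))).
Proof.
move=> A; rewrite /A ger0_norm ?Acal_ge0 //.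
split; [|split].
- by move=> x x_gt0 x_lt1; rewrite expfzB_nat ?gt_eqF // Acal_le.
- by rewrite expfzB_nat ?pnatr_eq0 // Acal_le_half.
- exact: Acal_le_balanced.
Qed.
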